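(* Fix a start pose $\mathbf{p}_0=(x_0,y_0,\theta_0)$ and CCC inputs $\mathbf{u}_i=(v_i,\omega_i)$, $i=1,2,3$, with $v_i>0$, $\omega_i\neq0$, $\operatorname{sign}\omega_1\neq\operatorname{sign}\omega_2$, $\operatorname{sign}\omega_2\neq\operatorname{sign}\omega_3$. A pose $\mathbf{p}_f=(x_f,y_f,\theta_f)$ is reachable from $\mathbf{p}_0$ by the CCC path with these inputs if and only if $$r_{31}^2\ \le\ (x_f-c)^2+(y_f-d)^2\ \le\ (r_{12}-r_{23})^2,$$ where $c=x_0-r_1\sin\theta_0+r_3\sin\theta_f$ and $d=y_0+r_1\cos\theta_0-r_3\cos\theta_f$.
   Context: A pose is $\mathbf{p}=(x,y,\theta)$, heading understood modulo $2\pi$. An input is $\mathbf{u}=(v,\omega)$. The motion primitive $\mathrm{M}_{\mathbf{u},\tau}$ maps $(x,y,\theta)$ to: if $\omega\neq0$, $\big(x-\frac{v}{\omega}(\sin\theta-\sin(\theta+\omega\tau)),\ y+\frac{v}{\omega}(\cos\theta-\cos(\theta+\omega\tau)),\ \theta+\omega\tau\big)$; if $\omega=0$, $(x+v\tau\cos\theta,\ y+v\tau\sin\theta,\ \theta)$. For a fixed path type with fixed inputs $\mathbf{u}_1,\mathbf{u}_2,\mathbf{u}_3$, a pose $\mathbf{p}_f$ is reachable from $\mathbf{p}_0$ if there exist durations $\tau_1,\tau_2,\tau_3\ge0$, with $|\omega_i\tau_i|<2\pi$ for each turning segment, such that $\mathrm{M}_{\mathbf{u}_3,\tau_3}(\mathrm{M}_{\mathbf{u}_2,\tau_2}(\mathrm{M}_{\mathbf{u}_1,\tau_1}(\mathbf{p}_0)))$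 has position $(x_f,y_f)$ and heading congruent to $\theta_f$ modulo $2\pi$. Notation: $r_i=v_i/\omega_i$, $r_{ij}=r_i-r_j$. *)

From Stdlib Require Import Reals Lra.
Open Scope R_scope.

Definition pose : Type := (R * R * R)%type.

Definition motion (v w tau : R) (p : pose) : pose :=
  let '(x, y, th) := p in
  if Req_EM_T w 0 then (x + v * tau * cos th, y + v * tau * sin th, th)
  else (x - v / w * (sin th - sin (th + w * tau)),
        y + v / w * (cos th - cos (th + w * tau)),
        th + w * tau).

Definition sgn (x : R) : R :=
  if Rlt_dec 0 x then 1 else if Rlt_dec x 0 then -1 else 0.

Definition admissible (w tau : R) : Prop :=
  0 <= tau /\ (w <> 0 -> Rabs (w * tau) < 2 * PI).

Definition reachable3 (v1 w1 v2 w2 v3 w3 : R) (p0 pf : pose) : Prop :=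
  exists t1 t2 t3 : R,
    admissible w1 t1 /\ admissible w2 t2 /\ admissible w3 t3 /\
    let '(x, y, th) := motion v3 w3 t3 (motion v2 w2 t2 (motion v1 w1 t1 p0)) in
    let '(xf, yf, thf) := pf in
    x = xf /\ y = yf /\ exists k : Z, th = thf + 2 * PI * IZR k.

(* After three turns the position is
     x0 - r1 sin th0 + r12 sin th1 + r23 sin th2 + r3 sin th3
   (and similarly for y), where th1, th2 are the headings at the two switches
   and th3 = thf modulo 2 PI.  Since each turn can reach every heading with an
   admissible duration, th1 and th2 are arbitrary, so p_f is reachable iff
   the vector (x_f - c, y_f - d), of length rho, is a sum of two vectors of
   lengths |r12| and |r23|.  The alternating signs of the turns give
   r12 r23 < 0, and such sums fill exactly the annulus
   (r12 + r23)^2 <= rho^2 <= (r12 - r23)^2. *)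

From Stdlib Require Import Reals Lra ZArith.
Open Scope R_scope.

Lemma sin_cos_2PI_mult (k : Z) : sin (2 * PI * IZR k) = 0 /\ cos (2 * PI * IZR k) = 1.
Proof.
  assert (Hs : sin (PI * IZR k) = 0) by (apply sin_eq_0_1; exists k; ring).
  split.
  - apply sin_eq_0_1. exists (2 * k)%Z. rewrite mult_IZR. ring.
  - replace (2 * PI * IZR k) with (2 * (PI * IZR k)) by ring.
    rewrite cos_2a_sin, Hs. ring.
Qed.

Lemma sin_period_Z (x : R) (k : Z) : sin (x + 2 * PI * IZR k) = sin x.
Proof. destruct (sin_cos_2PI_mult k) as [Hs Hc]. rewrite sin_plus, Hs, Hc. ring. Qed.

Lemma cos_period_Z (x : R) (k : Z) : cos (x + 2 * PI * IZR k) = cos x.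
Proof. destruct (sin_cos_2PI_mult k) as [Hs Hc]. rewrite cos_plus, Hs, Hc. ring. Qed.

Lemma exists_shift_0_2PI (d : R) : exists k : Z, 0 <= d + 2 * PI * IZR k < 2 * PI.
Proof.
  pose proof PI_RGT_0.
  destruct (archimed (d / (2 * PI))) as [Hup Hup1].
  exists (1 - up (d / (2 * PI)))%Z. rewrite minus_IZR.
  assert (Ed : d = d / (2 * PI) * (2 * PI)) by (field; lra).
  set (q := d / (2 * PI)) in *. set (z := IZR (up q)) in *.
  rewrite Ed. split; nra.
Qed.

Lemma turn_reaches_heading (w a b : R) : w <> 0 ->
  exists t (k : Z), admissible w t /\ a + w * t = b + 2 * PI * IZR k.
Proof.
  intros Hw. pose proof PI_RGT_0. unfold admissible.
  destruct (Rlt_dec 0 w) as [Hpos | Hneg].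
  - destruct (exists_shift_0_2PI (b - a)) as [k Hk].
    exists ((b - a + 2 * PI * IZR k) / w), k.
    replace (w * ((b - a + 2 * PI * IZR k) / w)) with (b - a + 2 * PI * IZR k)
      by (field; lra).
    split; [split|].
    + apply Rle_mult_inv_pos; lra.
    + intros _. rewrite Rabs_right; lra.
    + ring.
  - destruct (exists_shift_0_2PI (a - b)) as [k Hk].
    exists ((a - b + 2 * PI * IZR k) / - w), (- k)%Z. rewrite opp_IZR.
    replace (w * ((a - b + 2 * PI * IZR k) / - w)) with (- (a - b + 2 * PI * IZR k))
      by (field; lra).
    split; [split|].
    + apply Rle_mult_inv_pos; lra.
    + intros _. rewrite Rabs_Ropp, Rabs_right; lra.
    + ring.
Qed.

Lemma exists_angle_of_unit (s c : R) : s ^ 2 + c ^ 2 = 1 ->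
  exists phi, sin phi = s /\ cos phi = c.
Proof.
  intros H.
  assert (Hc : -1 <= c <= 1) by nra.
  assert (Hs : sqrt (1 - c²) = Rabs s).
  { rewrite <- sqrt_Rsqr_abs. f_equal. unfold Rsqr. nra. }
  destruct (Rle_dec 0 s).
  - exists (acos c). rewrite sin_acos, cos_acos, Hs, Rabs_right by lra. auto.
  - exists (- acos c). rewrite sin_neg, cos_neg, sin_acos, cos_acos, Hs, Rabs_left by lra.
    split; ring.
Qed.

Lemma exists_rotation (u1 u2 v1 v2 : R) : u1 ^ 2 + u2 ^ 2 = v1 ^ 2 + v2 ^ 2 ->
  exists th, v1 = u1 * cos th + u2 * sin th /\ v2 = u2 * cos th - u1 * sin th.
Proof.
  intros Hn. set (n := u1 ^ 2 + u2 ^ 2) in Hn.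
  destruct (Req_dec n 0) as [Hn0 | Hn0].
  - unfold n in *.
    assert (u1 = 0 /\ u2 = 0) as [-> ->] by (split; nra).
    assert (v1 = 0 /\ v2 = 0) as [-> ->] by (split; nra).
    exists 0. split; ring.
  - (* Lagrange's identity (u.v)^2 + (u x v)^2 = |u|^2 |v|^2 makes this a unit vector. *)
    destruct (exists_angle_of_unit ((u2 * v1 - u1 * v2) / n) ((u1 * v1 + u2 * v2) / n))
      as [th [Hs Hc]].
    { replace (((u2 * v1 - u1 * v2) / n) ^ 2 + ((u1 * v1 + u2 * v2) / n) ^ 2)
        with (n * (v1 ^ 2 + v2 ^ 2) / n ^ 2) by (unfold n; field; exact Hn0).
      rewrite <- Hn. field. exact Hn0. }
    exists th. rewrite Hs, Hc. unfold n in *. split; field; exact Hn0.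
Qed.

Lemma two_arms_norm (a b p1 p2 : R) :
  (a * sin p1 + b * sin p2) ^ 2 + (a * cos p1 + b * cos p2) ^ 2
  = a ^ 2 + b ^ 2 + 2 * a * b * cos (p1 - p2).
Proof.
  rewrite cos_minus.
  pose proof (sin2_cos2 p1). pose proof (sin2_cos2 p2). unfold Rsqr in *. nra.
Qed.

Lemma two_arms_annulus (a b X Y : R) : a * b < 0 ->
  (exists p1 p2, X = a * sin p1 + b * sin p2 /\ Y = a * cos p1 + b * cos p2) <->
  (a + b) ^ 2 <= X ^ 2 + Y ^ 2 <= (a - b) ^ 2.
Proof.
  intros Hab. split.
  - intros (p1 & p2 & -> & ->). rewrite two_arms_norm.
    pose proof (COS_bound (p1 - p2)). split; nra.
  - intros Hr.
    set (k := (X ^ 2 + Y ^ 2 - a ^ 2 - b ^ 2) / (2 * a * b)).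
    assert (Hk : 2 * a * b * k = X ^ 2 + Y ^ 2 - a ^ 2 - b ^ 2) by (unfold k; field; nra).
    assert (Hk1 : -1 <= k <= 1) by (split; nra).
    set (del := acos k).
    assert (Hcd : cos del = k) by exact (cos_acos k Hk1).
    destruct (exists_rotation (b * sin del) (a + b * cos del) X Y) as (th & EX & EY).
    { pose proof (sin2_cos2 del). unfold Rsqr in *. nra. }
    exists th, (del + th). rewrite sin_plus, cos_plus, EX, EY. split; ring.
Qed.

Lemma motion_turn (v w t x y th : R) : w <> 0 ->
  motion v w t (x, y, th) =
  (x - v / w * (sin th - sin (th + w * t)),
   y + v / w * (cos th - cos (th + w * t)), th + w * t).
Proof. intros Hw. unfold motion. destruct (Req_EM_T w 0); [contradiction | reflexivity]. Qed.

Lemma reachable3_turns_iff (v1 w1 v2 w2 v3 w3 x0 y0 th0 xf yf thf : R) :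
  w1 <> 0 -> w2 <> 0 -> w3 <> 0 ->
  reachable3 v1 w1 v2 w2 v3 w3 (x0, y0, th0) (xf, yf, thf) <->
  exists th1 th2,
    xf = x0 - v1 / w1 * sin th0 + (v1 / w1 - v2 / w2) * sin th1
           + (v2 / w2 - v3 / w3) * sin th2 + v3 / w3 * sin thf /\
    yf = y0 + v1 / w1 * cos th0 - (v1 / w1 - v2 / w2) * cos th1
           - (v2 / w2 - v3 / w3) * cos th2 - v3 / w3 * cos thf.
Proof.
  intros Hw1 Hw2 Hw3. split.
  - intros (t1 & t2 & t3 & _ & _ & _ & H). rewrite !motion_turn in H by assumption.
    destruct H as (Ex & Ey & k & Eth).
    exists (th0 + w1 * t1), (th0 + w1 * t1 + w2 * t2).
    rewrite <- Ex, <- Ey, <- (sin_period_Z thf k), <- (cos_period_Z thf k), <- Eth.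
    split; ring.
  - intros (th1 & th2 & Ex & Ey).
    destruct (turn_reaches_heading w1 th0 th1 Hw1) as (t1 & k1 & A1 & E1).
    destruct (turn_reaches_heading w2 (th0 + w1 * t1) th2 Hw2) as (t2 & k2 & A2 & E2).
    destruct (turn_reaches_heading w3 (th0 + w1 * t1 + w2 * t2) thf Hw3)
      as (t3 & k3 & A3 & E3).
    exists t1, t2, t3. do 3 (split; [assumption |]).
    rewrite !motion_turn by assumption.
    rewrite E3, E2, E1, !sin_period_Z, !cos_period_Z.
    split; [lra | split; [lra | exists k3; reflexivity]].
Qed.

Lemma sgn_neq_mul_neg (x y : R) : x <> 0 -> y <> 0 -> sgn x <> sgn y -> x * y < 0.
Proof.
  unfold sgn. intros Hx Hy Hs.
  destruct (Rlt_dec 0 x), (Rlt_dec 0 y); try (destruct Hs; reflexivity);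
    try destruct (Rlt_dec x 0); try destruct (Rlt_dec y 0);
    try (destruct Hs; reflexivity); nra.
Qed.

Lemma turning_radii_mul_neg (v w v' w' : R) : 0 < v -> 0 < v' -> w * w' < 0 ->
  (v / w) * (v' / w') < 0.
Proof.
  intros Hv Hv' Hw.
  assert (Hw0 : w <> 0) by (intro; subst; lra).
  assert (Hw0' : w' <> 0) by (intro; subst; lra).
  replace (v / w * (v' / w')) with (v * v' / (w * w')) by (field; auto).
  apply Rdiv_pos_neg; nra.
Qed.

Lemma alternating_radii_arms (r1 r2 r3 : R) : r1 * r2 < 0 -> r2 * r3 < 0 ->
  (r1 - r2) * (r2 - r3) < 0.
Proof. intros H12 H23. nra. Qed.

Theorem theorem2 (x0 y0 th0 v1 w1 v2 w2 v3 w3 xf yf thf : R) :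
  0 < v1 -> 0 < v2 -> 0 < v3 ->
  w1 <> 0 -> w2 <> 0 -> w3 <> 0 ->
  sgn w1 <> sgn w2 -> sgn w2 <> sgn w3 ->
  let r1 := v1 / w1 in let r2 := v2 / w2 in let r3 := v3 / w3 in
  let c := x0 - r1 * sin th0 + r3 * sin thf in
  let d := y0 + r1 * cos th0 - r3 * cos thf in
  (reachable3 v1 w1 v2 w2 v3 w3 (x0, y0, th0) (xf, yf, thf) <->
   (r3 - r1) ^ 2 <= (xf - c) ^ 2 + (yf - d) ^ 2 /\
   (xf - c) ^ 2 + (yf - d) ^ 2 <= ((r1 - r2) - (r2 - r3)) ^ 2).
Proof.
  intros Hv1 Hv2 Hv3 Hw1 Hw2 Hw3 S12 S23 r1 r2 r3 c d.
  assert (Harms : (r1 - r2) * (r2 - r3) < 0).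
  { apply alternating_radii_arms; apply turning_radii_mul_neg; auto;
      apply sgn_neq_mul_neg; auto. }
  replace ((r3 - r1) ^ 2) with (((r1 - r2) + (r2 - r3)) ^ 2) by ring.
  replace ((yf - d) ^ 2) with ((d - yf) ^ 2) by ring.
  rewrite (reachable3_turns_iff _ _ _ _ _ _ _ _ _ _ _ _ Hw1 Hw2 Hw3),
    <- (two_arms_annulus _ _ _ _ Harms).
  unfold c, d; fold r1 r2 r3.
  split; intros (th1 & th2 & Ex & Ey); exists th1, th2; split; lra.
Qed.
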